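(* Let $(X,Y)$ be a bivariate random vector whose distribution is given by a joint pmf or a joint pdf (w.r.t. Lebesgue measure) $f$. Call $(X,Y)$ UR$_{\mathrm E}$ (resp. LR$_{\mathrm E}$) if $f(x,y)\ge f(-y,-x)$ whenever $|x|<y$ (resp. whenever $|y|<x$), and UR$^{\mathrm E}$ (resp. LR$^{\mathrm E}$) if $f(x,y)\le f(-y,-x)$ whenever $|x|<y$ (resp. whenever $|y|<x$). Then: (i) UR$_{\mathrm E}$ implies $|X|\le_{\mathrm{st}}|\max(X,Y)|$ and $|\min(X,Y)|\le_{\mathrm{st}}|Y|$; (ii) LR$_{\mathrm E}$ implies $|Y|\le_{\mathrm{st}}|\max(X,Y)|$ and $|\min(X,Y)|\le_{\mathrm{st}}|X|$; (iii) UR$^{\mathrm E}$ implies $|X|\ge_{\mathrm{st}}|\max(X,Y)|$ and $|\min(X,Y)|\ge_{\mathrm{st}}|Y|$; (iv) LR$^{\mathrm E}$ implies $|Y|\ge_{\mathrm{st}}|\max(X,Y)|$ and $|\min(X,Y)|\ge_{\mathrm{st}}|X|$. Under the hypothesis of (i) the stochastic inequalities in (i) are strict if and only if $\Pr[|X|<Y]>\Pr[X<-|Y|]$; under the hypothesis of (iii), those in (iii) are strict iff $\Pr[|X|<Y]<\Pr[X<-|Y|]$. Under the hypothesis of (ii), those in (ii) are strict iff $\Pr[|Y|<X]>\Pr[Y<-|X|]$; under the hypothesis of (iv), those in (iv) are strict iff $\Pr[|Y|<X]<\Pr[Y<-|X|]$.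
   Context: For random variables $U,V$, $U\le_{\mathrm{st}}V$ (equivalently $V\ge_{\mathrm{st}}U$) means $F_U(x)\ge F_V(x)$ for all real $x$, $F$ denoting the cdf; the inequality is strict if in addition $F_U(x)>F_V(x)$ for at least one $x$. *)

From HB Require Import structures.
From mathcomp Require Import all_boot all_order all_algebra.
From mathcomp Require Import all_classical all_reals all_analysis.
Set Implicit Arguments. Unset Strict Implicit. Unset Printing Implicit Defensive.
Import Order.TTheory GRing.Theory Num.Theory.
Import numFieldNormedType.Exports.
Local Open Scope classical_set_scope.
Local Open Scope ring_scope.

(* The joint law of (X,Y) is a probability measure mu on R x R;
   a point p : R * R stands for (X,Y) = (p.1, p.2). *)

Definition is_joint_pmf (R : realType) (mu : set (R * R) -> \bar R)
  (f : R * R -> R) : Prop :=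
  (forall p, 0 <= f p) /\
  (forall A : set (R * R), measurable A -> mu A = (\esum_(p in A) (f p)%:E)%E).

Definition is_joint_pdf (R : realType) (mu : set (R * R) -> \bar R)
  (f : R * R -> R) : Prop :=
  (forall p, 0 <= f p) /\ measurable_fun setT f /\
  (forall A : set (R * R), measurable A ->
     mu A = (\int[(@lebesgue_measure R) \x (@lebesgue_measure R)]_(p in A) (f p)%:E)%E).

Definition UR_E (R : realType) (f : R * R -> R) : Prop :=
  forall x y : R, `|x| < y -> f (- y, - x) <= f (x, y).
Definition LR_E (R : realType) (f : R * R -> R) : Prop :=
  forall x y : R, `|y| < x -> f (- y, - x) <= f (x, y).
Definition UR_E' (R : realType) (f : R * R -> R) : Prop :=
  forall x y : R, `|x| < y -> f (x, y) <= f (- y, - x).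
Definition LR_E' (R : realType) (f : R * R -> R) : Prop :=
  forall x y : R, `|y| < x -> f (x, y) <= f (- y, - x).

Definition cdf_of (R : realType) (mu : set (R * R) -> \bar R)
  (g : R * R -> R) (t : R) : \bar R := mu [set p | g p <= t].

Definition st_le (R : realType) (mu : set (R * R) -> \bar R)
  (g h : R * R -> R) : Prop :=
  forall t, (cdf_of mu h t <= cdf_of mu g t)%E.
Definition st_lt (R : realType) (mu : set (R * R) -> \bar R)
  (g h : R * R -> R) : Prop :=
  st_le mu g h /\ exists t, (cdf_of mu h t < cdf_of mu g t)%E.

Definition absX (R : realType) (p : R * R) : R := `|p.1|.
Definition absY (R : realType) (p : R * R) : R := `|p.2|.
Definition absmax (R : realType) (p : R * R) : R := `|Num.max p.1 p.2|.
Definition absmin (R : realType) (p : R * R) : R := `|Num.min p.1 p.2|.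

From HB Require Import structures.
From mathcomp Require Import all_boot all_order all_algebra.
From mathcomp Require Import all_classical all_reals all_analysis.
From mathcomp Require Import measurable_realfun lra.
Set Implicit Arguments. Unset Strict Implicit. Unset Printing Implicit Defensive.
Import Order.TTheory GRing.Theory Num.Theory.
Import numFieldNormedType.Exports.
Local Open Scope classical_set_scope.
Local Open Scope ring_scope.

(* Let s(x, y) = (-y, -x) be the reflection in the antidiagonal.  It is an
   involution preserving counting measure and Lebesgue measure on R^2, so UR_E
   says that mu (s^-1 B) <= mu B for every measurable B inside the wedge
   |x| < y.  For each t the events {|X| <= t} and {|max(X, Y)| <= t} differ by
   the strip {|x| <= t < y} of that wedge on one side and by its mirror image
   on the other, so F_|X|(t) - F_|max(X,Y)|(t) = mu strip - mu (s^-1 strip) >= 0,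
   and likewise for |min(X, Y)| and |Y|.  The inequality is strict at some t iff
   some strip loses mass under s; as the strips with rational t cover the
   wedge and the defect B |-> mu B - mu (s^-1 B) is monotone and
   sigma-additive on subsets of the wedge, this happens iff the whole wedge
   loses mass, i.e. Pr[X < -|Y|] < Pr[|X| < Y].  The other parts are the same
   argument for the wedge |y| < x and for the mirrored wedges. *)

Definition preimage_le_on {d} {T : measurableType d} {R : realType}
    (mu : set T -> \bar R) (s : T -> T) (D : set T) :=
  forall B, measurable B -> B `<=` D -> (mu (s @^-1` B) <= mu B)%E.

Section finite_measure_setD.
Local Open Scope ereal_scope.
Context d (T : measurableType d) (R : realType).
Variable mu : {finite_measure set T -> \bar R}.

Lemma measure_le_setD (G H : set T) : measurable G -> measurable H ->
  (mu H <= mu G) = (mu (H `\` G) <= mu (G `\` H)).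
Proof.
move=> mG mH; rewrite (measureDI mu mG mH) (measureDI mu mH mG) setIC.
by rewrite leeD2rE // fin_num_measure //; exact: measurableI.
Qed.

Lemma measure_lt_setD (G H : set T) : measurable G -> measurable H ->
  (mu H < mu G) = (mu (H `\` G) < mu (G `\` H)).
Proof.
move=> mG mH; rewrite (measureDI mu mG mH) (measureDI mu mH mG) setIC.
by rewrite lteD2rE // fin_num_measure //; exact: measurableI.
Qed.

End finite_measure_setD.

Definition rat_cover {d} {T : measurableType d} {R : realType}
    (D : set T) (A : R -> set T) :=
  [/\ measurable D, forall t, measurable (A t), forall t, A t `<=` D
    & D = \bigcup_(q : rat) A (ratr q)].

Section preimage_le_on.
Local Open Scope ereal_scope.
Context d (T : measurableType d) (R : realType).
Variables (mu : {finite_measure set T -> \bar R}) (s : T -> T).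
Hypothesis ms : measurable_fun setT s.

Let mpre {B} : measurable B -> measurable (s @^-1` B).
Proof. by move=> mB; rewrite -[X in measurable X]setTI; exact: ms. Qed.

Lemma preimage_le_onS (D E : set T) :
  E `<=` D -> preimage_le_on mu s D -> preimage_le_on mu s E.
Proof. by move=> ED sD B mB BE; apply: sD => //; exact: subset_trans ED. Qed.

Lemma measure_preimage_lt_sub (D B : set T) : measurable D -> measurable B ->
  B `<=` D -> preimage_le_on mu s D ->
  mu (s @^-1` B) < mu B -> mu (s @^-1` D) < mu D.
Proof.
move=> mD mB BD sD lt_B.
have DB : D `&` B = B by exact/setIidr.
rewrite (measureDI mu mD mB) (measureDI mu (mpre mD) (mpre mB)) -preimage_setI DB.
rewrite addeC [X in _ < X]addeC.
apply: lte_leD => //.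
  by rewrite fin_num_measure //; apply: measurableD; exact: mpre.
by apply: (sD (D `\` B)); [exact: measurableD | exact: subDsetl].
Qed.

Lemma measure_preimage_eq_sub (Y X : set T) : measurable Y -> measurable X ->
  X `<=` Y -> preimage_le_on mu s Y ->
  mu (s @^-1` Y) = mu Y -> mu (s @^-1` X) = mu X.
Proof.
move=> mY mX XY sY eqY; apply/eqP; rewrite eq_le sY //=.
by rewrite leNgt; apply/negP => /(measure_preimage_lt_sub mY mX XY sY); rewrite eqY ltxx.
Qed.

Lemma measure_preimage_lt_cover (I : countType) (A : I -> set T) (D : set T) :
  (forall i, measurable (A i)) -> D = \bigcup_i A i -> preimage_le_on mu s D ->
  mu (s @^-1` D) < mu D -> exists i, mu (s @^-1` A i) < mu (A i).
Proof.
move=> mA DA sD lt_D; apply: contrapT => /forallNP eqA.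
pose F n := if unpickle n is Some i then A i else set0.
have mF n : measurable (F n) by rewrite /F; case: unpickle.
have FD n : F n `<=` D.
  by rewrite /F DA; case: unpickle => [i|//]; exact: bigcup_sup.
have DF : D = \bigcup_n F n.
  rewrite DA; apply/seteqP; split => [p [i _ Aip]|p [n _]].
    by exists (pickle i) => //; rewrite /F pickleK.
  by rewrite /F; case: unpickle => // i Aip; exists i.
have eqF n : mu (s @^-1` F n) = mu (F n).
  rewrite /F; case: unpickle => [i|]; last by rewrite preimage_set0.
  apply/eqP; rewrite eq_le sD //=; last by rewrite DA; exact: bigcup_sup.
  by rewrite leNgt; apply/negP => lt; apply: (eqA i).
(* s preserves the mass of each piece of the disjointified cover, hence of D. *)
set B := seqDU F.
have mB n : measurable (B n).
  by apply: measurableD => //; exact: bigsetU_measurable.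
have tB := trivIset_seqDU F.
have eqB n : mu (s @^-1` B n) = mu (B n).
  apply: (measure_preimage_eq_sub (mF n) (mB n) (@subDsetl _ _ _) _ (eqF n)).
  exact: preimage_le_onS (FD n) sD.
have DB : D = \bigcup_n B n by rewrite DF seqDU_bigcup_eq.
have tsB : trivIset setT (fun n => s @^-1` B n).
  by move=> i j _ _ [p [Bi Bj]]; apply: (tB i j) => //; exists (s p).
suff : mu (s @^-1` D) = mu D by move=> e; move: lt_D; rewrite e ltxx.
rewrite DB preimage_bigcup !measure_semi_bigcup //.
- by apply: eq_eseriesr => n _; exact: eqB.
- exact: bigcup_measurable.
- by move=> n; exact: mpre.
- by rewrite -preimage_bigcup; apply: mpre; exact: bigcup_measurable.
Qed.

Lemma rat_cover_preimage (D : set T) (A : R -> set T) :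
  rat_cover D A -> rat_cover (s @^-1` D) (fun t => s @^-1` A t).
Proof.
case=> mD mA AD DA; split => [||t|]; [exact: mpre | by move=> t; exact: mpre | |].
- exact: preimage_subset (AD t).
- by rewrite DA preimage_bigcup.
Qed.

End preimage_le_on.

Section measurable_comparison.
Context d (T : measurableType d) (R : realType).
Implicit Types g h : T -> R.

Lemma measurable_ler_set g h : measurable_fun setT g -> measurable_fun setT h ->
  measurable [set p | g p <= h p].
Proof.
move=> mg mh; rewrite -[X in measurable X]setTI -[X in _ `&` X]preimage_true.
exact: measurable_fun_ler.
Qed.

Lemma measurable_ltr_set g h : measurable_fun setT g -> measurable_fun setT h ->
  measurable [set p | g p < h p].
Proof.
move=> mg mh; rewrite -[X in measurable X]setTI -[X in _ `&` X]preimage_true.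
exact: measurable_fun_ltr.
Qed.

End measurable_comparison.

Section antidiagonal_reflection.
Context {R : realType}.
Local Notation T := (R * R)%type.
Local Notation leb := (@lebesgue_measure R).

Definition refl_antidiag (p : T) : T := (- p.2, - p.1).
Local Notation refl := refl_antidiag.

Lemma refl_antidiagK : involutive refl.
Proof. by case=> x y; rewrite /refl /= !opprK. Qed.

Lemma preimage_refl_antidiagK (S : set T) : refl @^-1` (refl @^-1` S) = S.
Proof. by apply/seteqP; split => p /=; rewrite refl_antidiagK. Qed.

Lemma measurable_refl_antidiag : measurable_fun setT refl.
Proof. by apply: measurable_fun_pair; apply: measurableT_comp. Qed.

Lemma measurable_preimage_refl_antidiag (B : set T) :
  measurable B -> measurable (refl @^-1` B).
Proof.
by move=> mB; rewrite -[X in measurable X]setTI; exact: measurable_refl_antidiag.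
Qed.

Lemma lebesgue_measure_preimage_oppr (A : set R) : measurable A ->
  leb (-%R @^-1` A) = leb A.
Proof.
move=> mA; symmetry.
have uniq := @lebesgue_measure_unique R
  (@pushforward _ _ (measurableTypeR R) (measurableTypeR R) R leb -%R
    : {measure set _ -> \bar R}).
apply: uniq => //.
move=> _ [[a b] _ <-] /=; rewrite /pushforward.
have -> : -%R @^-1` `]a, b]%classic = `[- b, - a[%classic :> set R.
  by apply/seteqP; split => x /=; rewrite !in_itv /= => /andP[? ?]; apply/andP; split; lra.
by rewrite !lebesgue_measure_itv /= !lte_fin ltrN2; case: ifPn => // _; rewrite opprK addrC.
Qed.

Lemma product_lebesgue_preimage_refl_antidiag (X : set T) : measurable X ->
  (leb \x leb)%E (refl @^-1` X) = (leb \x leb)%E X.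
Proof.
move=> mX; symmetry.
have uniq := product_measure_unique (m1 := leb) (m2 := leb)
  (m' := @pushforward _ _ (measurableTypeR R * measurableTypeR R)%type
     (measurableTypeR R * measurableTypeR R)%type R (leb \x leb)%E refl
     : {measure set _ -> \bar R}).
apply: (uniq measurable_refl_antidiag) => // A B mA mB.
have mN (C : set R) : measurable C -> measurable (-%R @^-1` C).
  by move=> mC; rewrite -[X in measurable X]setTI; exact: oppr_measurable.
have reflAB : refl @^-1` (A `*` B) = (-%R @^-1` B) `*` (-%R @^-1` A).
  by apply/seteqP; split => p [].
transitivity ((leb \x leb)%E ((-%R @^-1` B) `*` (-%R @^-1` A))).
  exact: (congr1 _ reflAB).
rewrite product_measure1E; [|exact: mN..].
by rewrite muleC; congr (_ * _)%E; exact: lebesgue_measure_preimage_oppr.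
Qed.

Lemma image_refl_antidiag (B : set T) : refl @` B = refl @^-1` B.
Proof.
apply/seteqP; split => p /=; first by case=> q Bq <-; rewrite refl_antidiagK.
by move=> Bp; exists (refl p); rewrite ?refl_antidiagK.
Qed.

Lemma joint_pmf_preimage_le_on (mu : {finite_measure set T -> \bar R}) f (D : set T) :
  is_joint_pmf mu f -> (forall p, D p -> f (refl p) <= f p) ->
  preimage_le_on mu refl D.
Proof.
move=> [_ muE] fD B mB BD.
rewrite (muE _ (measurable_preimage_refl_antidiag mB)) (muE _ mB) -image_refl_antidiag.
rewrite esum_image; last by move=> p q _ _ /(congr1 refl); rewrite !refl_antidiagK.
by apply: le_esum => p Bp; rewrite lee_fin; apply/fD/BD.
Qed.

Lemma joint_pdf_preimage_le_on (mu : {finite_measure set T -> \bar R}) f (D : set T) :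
  is_joint_pdf mu f -> (forall p, D p -> f (refl p) <= f p) ->
  preimage_le_on mu refl D.
Proof.
move=> [f0 [mf muE]] fD B mB BD.
rewrite (muE _ (measurable_preimage_refl_antidiag mB)) (muE _ mB).
have mfE : measurable_fun setT (fun p => (f p)%:E) by exact/measurable_EFinP.
have mfrefl : measurable_fun setT (fun p => (f (refl p))%:E).
  by apply/measurable_EFinP; apply: measurableT_comp => //; exact: measurable_refl_antidiag.
have push := @ge0_integral_pushforward _ _ (measurableTypeR R * measurableTypeR R)%type
  (measurableTypeR R * measurableTypeR R)%type R refl measurable_refl_antidiag
  (leb \x leb)%E B (fun p => (f (refl p))%:E) mB
  (measurable_funS measurableT (@subsetT _ _) mfrefl) (fun p _ => f0 _).
rewrite (eq_measure_integral (leb \x leb)%E) in push; last first.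
- by move=> ? A mA _; exact: product_lebesgue_preimage_refl_antidiag.
- exact: measurable_refl_antidiag.
have -> : (\int[(leb \x leb)%E]_(p in refl @^-1` B) (f p)%:E =
    \int[(leb \x leb)%E]_(p in B) (f (refl p))%:E)%E.
  by rewrite push; apply: eq_integral => p _ /=; rewrite refl_antidiagK.
apply: ge0_le_integral => //.
- by move=> p _; rewrite lee_fin.
- exact: measurable_funS measurableT (@subsetT _ _) mfrefl.
- exact: measurable_funS measurableT (@subsetT _ _) mfE.
- by move=> p Bp; rewrite lee_fin; apply/fD/BD.
Qed.

Lemma density_preimage_le_on (mu : {finite_measure set T -> \bar R}) f (D : set T) :
  is_joint_pmf mu f \/ is_joint_pdf mu f -> (forall p, D p -> f (refl p) <= f p) ->
  preimage_le_on mu refl D.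
Proof.
by case=> [/joint_pmf_preimage_le_on|/joint_pdf_preimage_le_on]; apply.
Qed.

Definition wedgeN : set T := [set p | `|p.1| < p.2].
Definition wedgeE : set T := [set p | `|p.2| < p.1].
Definition stripN (t : R) : set T := [set p | `|p.1| <= t /\ t < p.2].
Definition stripE (t : R) : set T := [set p | `|p.2| <= t /\ t < p.1].

Lemma wedgeW_preimage : [set p : T | p.1 < - `|p.2|] = refl @^-1` wedgeN.
Proof. by apply/seteqP; split => -[x y]; rewrite /wedgeN /= normrN ltrNr. Qed.

Lemma wedgeS_preimage : [set p : T | p.2 < - `|p.1|] = refl @^-1` wedgeE.
Proof. by apply/seteqP; split => -[x y]; rewrite /wedgeE /= normrN ltrNr. Qed.

End antidiagonal_reflection.

Section stochastic_order.
Context {R : realType}.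
Local Notation T := (R * R)%type.
Variables (mu : {finite_measure set T -> \bar R}) (s : T -> T).
Hypothesis ms : measurable_fun setT s.

Lemma st_order_of_setD (g h : T -> R) (D : set T) (A : R -> set T) :
  measurable_fun setT g -> measurable_fun setT h ->
  rat_cover D A -> preimage_le_on mu s D ->
  (forall t, [set p | g p <= t] `\` [set p | h p <= t] = A t) ->
  (forall t, [set p | h p <= t] `\` [set p | g p <= t] = s @^-1` A t) ->
  st_le mu g h /\ (st_lt mu g h <-> (mu (s @^-1` D) < mu D)%E).
Proof.
move=> mg mh [mD mA AD DA] sD gh hg.
have mG t : measurable [set p | g p <= t] by exact: measurable_ler_set mg (measurable_cst t).
have mH t : measurable [set p | h p <= t] by exact: measurable_ler_set mh (measurable_cst t).
have cdf_le t : (cdf_of mu h t <= cdf_of mu g t)%E = (mu (s @^-1` A t) <= mu (A t))%E.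
  by rewrite /cdf_of measure_le_setD // gh hg.
have cdf_lt t : (cdf_of mu h t < cdf_of mu g t)%E = (mu (s @^-1` A t) < mu (A t))%E.
  by rewrite /cdf_of measure_lt_setD // gh hg.
have st : st_le mu g h by move=> t; rewrite cdf_le; exact: sD (AD t).
split=> //; split => [[_ [t]]|lt_D].
- by rewrite cdf_lt; exact: (measure_preimage_lt_sub ms mD (mA t) (AD t) sD).
- have [q] := measure_preimage_lt_cover ms (fun q => mA (ratr q)) DA sD lt_D.
  by split=> //; exists (ratr q); rewrite cdf_lt.
Qed.

End stochastic_order.

Section absolute_values.
Context {R : realType}.
Local Notation T := (R * R)%type.
Local Notation refl := (@refl_antidiag R).

Lemma measurable_absX : measurable_fun setT (@absX R).
Proof. exact: measurableT_comp. Qed.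

Lemma measurable_absY : measurable_fun setT (@absY R).
Proof. exact: measurableT_comp. Qed.

Lemma measurable_absmax : measurable_fun setT (@absmax R).
Proof. by apply: measurableT_comp => //; exact: measurable_maxr. Qed.

Lemma measurable_absmin : measurable_fun setT (@absmin R).
Proof. by apply: measurableT_comp => //; exact: measurable_minr. Qed.

Lemma rat_cover_wedgeN : rat_cover wedgeN (@stripN R).
Proof.
split => [||t p [] /le_lt_trans/[apply]//|].
- exact: measurable_ltr_set measurable_absX measurable_snd.
- move=> t; apply: measurableI; first exact: measurable_ler_set measurable_absX (measurable_cst t).
  exact: measurable_ltr_set (measurable_cst t) measurable_snd.
apply/seteqP; split => [p /rat_in_itvoo[q]|p [q _ [] /le_lt_trans/[apply]//]].
by rewrite in_itv /= => /andP[? ?]; exists q => //; split => //; exact: ltW.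
Qed.

Lemma rat_cover_wedgeE : rat_cover wedgeE (@stripE R).
Proof.
split => [||t p [] /le_lt_trans/[apply]//|].
- exact: measurable_ltr_set measurable_absY measurable_fst.
- move=> t; apply: measurableI; first exact: measurable_ler_set measurable_absY (measurable_cst t).
  exact: measurable_ltr_set (measurable_cst t) measurable_fst.
apply/seteqP; split => [p /rat_in_itvoo[q]|p [q _ [] /le_lt_trans/[apply]//]].
by rewrite in_itv /= => /andP[? ?]; exists q => //; split => //; exact: ltW.
Qed.

Ltac solve_setD := apply/seteqP; split => -[x y] /=;
  rewrite /absX /absY /absmax /absmin /refl_antidiag /stripN /stripE /=
    ?maxEle ?minEle; case: ifP => ?; rewrite ?normrN ?ler_norml ?ltr_norml; lra.

Lemma setD_absX_absmax (t : R) :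
  [set p | absX p <= t] `\` [set p | absmax p <= t] = stripN t.
Proof. solve_setD. Qed.

Lemma setD_absmax_absX (t : R) :
  [set p | absmax p <= t] `\` [set p | absX p <= t] = refl @^-1` stripN t.
Proof. solve_setD. Qed.

Lemma setD_absmin_absY (t : R) :
  [set p | absmin p <= t] `\` [set p | absY p <= t] = stripN t.
Proof. solve_setD. Qed.

Lemma setD_absY_absmin (t : R) :
  [set p | absY p <= t] `\` [set p | absmin p <= t] = refl @^-1` stripN t.
Proof. solve_setD. Qed.

Lemma setD_absY_absmax (t : R) :
  [set p | absY p <= t] `\` [set p | absmax p <= t] = stripE t.
Proof. solve_setD. Qed.

Lemma setD_absmax_absY (t : R) :
  [set p | absmax p <= t] `\` [set p | absY p <= t] = refl @^-1` stripE t.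
Proof. solve_setD. Qed.

Lemma setD_absmin_absX (t : R) :
  [set p | absmin p <= t] `\` [set p | absX p <= t] = stripE t.
Proof. solve_setD. Qed.

Lemma setD_absX_absmin (t : R) :
  [set p | absX p <= t] `\` [set p | absmin p <= t] = refl @^-1` stripE t.
Proof. solve_setD. Qed.

Variable mu : {finite_measure set T -> \bar R}.

Lemma st_order_of_setD_refl (g h : T -> R) (D : set T) (A : R -> set T) :
  measurable_fun setT g -> measurable_fun setT h ->
  rat_cover D A -> preimage_le_on mu refl (refl @^-1` D) ->
  (forall t, [set p | g p <= t] `\` [set p | h p <= t] = refl @^-1` A t) ->
  (forall t, [set p | h p <= t] `\` [set p | g p <= t] = A t) ->
  st_le mu g h /\ (st_lt mu g h <-> (mu D < mu (refl @^-1` D))%E).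
Proof.
move=> mg mh cover dom gh hg; rewrite -[in mu D](preimage_refl_antidiagK D).
have cover' := rat_cover_preimage measurable_refl_antidiag cover.
apply: (st_order_of_setD measurable_refl_antidiag mg mh cover' dom gh) => t.
by rewrite preimage_refl_antidiagK.
Qed.

Variable f : T -> R.
Hypothesis density_f : is_joint_pmf mu f \/ is_joint_pdf mu f.

Lemma UR_E_st_order : UR_E f ->
  (st_le mu (@absX R) (@absmax R) /\ st_le mu (@absmin R) (@absY R)) /\
  (st_lt mu (@absX R) (@absmax R) <->
     (mu [set p | (p.1 < - `|p.2|)%R] < mu [set p | (`|p.1| < p.2)%R])%E) /\
  (st_lt mu (@absmin R) (@absY R) <->
     (mu [set p | (p.1 < - `|p.2|)%R] < mu [set p | (`|p.1| < p.2)%R])%E).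
Proof.
move=> UR; rewrite wedgeW_preimage.
have dom : preimage_le_on mu refl wedgeN.
  by apply: density_preimage_le_on density_f _ => -[x y]; exact: UR.
have [le1 lt1] := st_order_of_setD measurable_refl_antidiag measurable_absX
  measurable_absmax rat_cover_wedgeN dom setD_absX_absmax setD_absmax_absX.
have [le2 lt2] := st_order_of_setD measurable_refl_antidiag measurable_absmin
  measurable_absY rat_cover_wedgeN dom setD_absmin_absY setD_absY_absmin.
by [].
Qed.

Lemma LR_E_st_order : LR_E f ->
  (st_le mu (@absY R) (@absmax R) /\ st_le mu (@absmin R) (@absX R)) /\
  (st_lt mu (@absY R) (@absmax R) <->
     (mu [set p | (p.2 < - `|p.1|)%R] < mu [set p | (`|p.2| < p.1)%R])%E) /\
  (st_lt mu (@absmin R) (@absX R) <->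
     (mu [set p | (p.2 < - `|p.1|)%R] < mu [set p | (`|p.2| < p.1)%R])%E).
Proof.
move=> LR; rewrite wedgeS_preimage.
have dom : preimage_le_on mu refl wedgeE.
  by apply: density_preimage_le_on density_f _ => -[x y]; exact: LR.
have [le1 lt1] := st_order_of_setD measurable_refl_antidiag measurable_absY
  measurable_absmax rat_cover_wedgeE dom setD_absY_absmax setD_absmax_absY.
have [le2 lt2] := st_order_of_setD measurable_refl_antidiag measurable_absmin
  measurable_absX rat_cover_wedgeE dom setD_absmin_absX setD_absX_absmin.
by [].
Qed.

Lemma UR_E'_st_order : UR_E' f ->
  (st_le mu (@absmax R) (@absX R) /\ st_le mu (@absY R) (@absmin R)) /\
  (st_lt mu (@absmax R) (@absX R) <->
     (mu [set p | (`|p.1| < p.2)%R] < mu [set p | (p.1 < - `|p.2|)%R])%E) /\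
  (st_lt mu (@absY R) (@absmin R) <->
     (mu [set p | (`|p.1| < p.2)%R] < mu [set p | (p.1 < - `|p.2|)%R])%E).
Proof.
move=> UR'; rewrite wedgeW_preimage.
have dom : preimage_le_on mu refl (refl @^-1` wedgeN).
  by apply: density_preimage_le_on density_f _ => -[x y] /UR'; rewrite /= !opprK.
have [le1 lt1] := st_order_of_setD_refl measurable_absmax measurable_absX
  rat_cover_wedgeN dom setD_absmax_absX setD_absX_absmax.
have [le2 lt2] := st_order_of_setD_refl measurable_absY measurable_absmin
  rat_cover_wedgeN dom setD_absY_absmin setD_absmin_absY.
by [].
Qed.

Lemma LR_E'_st_order : LR_E' f ->
  (st_le mu (@absmax R) (@absY R) /\ st_le mu (@absX R) (@absmin R)) /\
  (st_lt mu (@absmax R) (@absY R) <->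
     (mu [set p | (`|p.2| < p.1)%R] < mu [set p | (p.2 < - `|p.1|)%R])%E) /\
  (st_lt mu (@absX R) (@absmin R) <->
     (mu [set p | (`|p.2| < p.1)%R] < mu [set p | (p.2 < - `|p.1|)%R])%E).
Proof.
move=> LR'; rewrite wedgeS_preimage.
have dom : preimage_le_on mu refl (refl @^-1` wedgeE).
  by apply: density_preimage_le_on density_f _ => -[x y] /LR'; rewrite /= !opprK.
have [le1 lt1] := st_order_of_setD_refl measurable_absmax measurable_absY
  rat_cover_wedgeE dom setD_absmax_absY setD_absY_absmax.
have [le2 lt2] := st_order_of_setD_refl measurable_absX measurable_absmin
  rat_cover_wedgeE dom setD_absX_absmin setD_absmin_absX.
by [].
Qed.

End absolute_values.

Theorem proposition4p3 (R : realType) (mu : probability (R * R)%type R)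
  (f : R * R -> R) :
  is_joint_pmf mu f \/ is_joint_pdf mu f ->
  (UR_E f ->
    (st_le mu (@absX R) (@absmax R) /\ st_le mu (@absmin R) (@absY R)) /\
    (st_lt mu (@absX R) (@absmax R) <->
       (mu [set p | (p.1 < - `|p.2|)%R] < mu [set p | (`|p.1| < p.2)%R])%E) /\
    (st_lt mu (@absmin R) (@absY R) <->
       (mu [set p | (p.1 < - `|p.2|)%R] < mu [set p | (`|p.1| < p.2)%R])%E)) /\
  (LR_E f ->
    (st_le mu (@absY R) (@absmax R) /\ st_le mu (@absmin R) (@absX R)) /\
    (st_lt mu (@absY R) (@absmax R) <->
       (mu [set p | (p.2 < - `|p.1|)%R] < mu [set p | (`|p.2| < p.1)%R])%E) /\
    (st_lt mu (@absmin R) (@absX R) <->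
       (mu [set p | (p.2 < - `|p.1|)%R] < mu [set p | (`|p.2| < p.1)%R])%E)) /\
  (UR_E' f ->
    (st_le mu (@absmax R) (@absX R) /\ st_le mu (@absY R) (@absmin R)) /\
    (st_lt mu (@absmax R) (@absX R) <->
       (mu [set p | (`|p.1| < p.2)%R] < mu [set p | (p.1 < - `|p.2|)%R])%E) /\
    (st_lt mu (@absY R) (@absmin R) <->
       (mu [set p | (`|p.1| < p.2)%R] < mu [set p | (p.1 < - `|p.2|)%R])%E)) /\
  (LR_E' f ->
    (st_le mu (@absmax R) (@absY R) /\ st_le mu (@absX R) (@absmin R)) /\
    (st_lt mu (@absmax R) (@absY R) <->
       (mu [set p | (`|p.2| < p.1)%R] < mu [set p | (p.2 < - `|p.1|)%R])%E) /\
    (st_lt mu (@absX R) (@absmin R) <->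
       (mu [set p | (`|p.2| < p.1)%R] < mu [set p | (p.2 < - `|p.1|)%R])%E)).
Proof.
move=> density_f; split; [|split; [|split]].
- exact: UR_E_st_order density_f.
- exact: LR_E_st_order density_f.
- exact: UR_E'_st_order density_f.
- exact: LR_E'_st_order density_f.
Qed.
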